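(* Let $\mathscr C$ be an extensive category, $(T,\mu,\eta)$ a consistent monad on $\mathscr C$, $F\colon\mathscr C\to\mathscr C$ a functor and $\bar F\colon\mathcal{K}\ell(T)\to\mathcal{K}\ell(T)$ an extension of $F$, and $I$ an object. Then the functor $G\colon\mathrm{Coalg}_I^{\mathsf p}(\bar F)\to\mathrm{Coalg}_I(TF+T)$ reflects isomorphisms, and a morphism $h$ of $\mathrm{Coalg}_I^{\mathsf p}(\bar F)$ is carried by a pure monomorphism (i.e. by a monomorphism of $\mathscr C$) if and only if $Gh$ is carried by a monomorphism of $\mathscr C$ (i.e. $G$ preserves and reflects subcoalgebras).
   Context: A category is extensive if it has finite coproducts and for all objects $A,B$ the canonical functor $\mathscr C/A\times\mathscr C/B\to\mathscr C/(A+B)$ is an equivalence. $\mathcal{K}\ell(T)$ is the Kleisli category: morphisms $X\to Y$ are morphisms $X\to TY$ of $\mathscr C$, composition $g\circ f=\mu_Z\cdot Tg\cdot f$, identities $\eta_X$. $T$ is consistent if every $\eta_X$ is monic. A Kleisli morphism is pure if it is of the form $\eta_Y\cdot f$ for $f\colon X\to Y$ in $\mathscr C$; since $T$ is consistent, pure morphisms are identified with morphisms of $\mathscr C$ via $J(f)=\eta_Y\cdot f$. $\bar F$ is an extension of $F$ if $\bar F J=JF$. A pure monomorphism is a pure morphism whose underlying $\mathscr C$-morphism is a monomorphism. $\mathrm{Coalg}_I^{\mathsf p}(\bar F)$ has as objects $I$-pointed $\bar F$-coalgebras $(C,c,i_C)$ with $c\colon C\to TFC$, $i_C\colon I\to TC$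 (Kleisli morphisms $C\to\bar FC$, $I\to C$), and as morphisms pure coalgebra homomorphisms preserving pointings. $\mathrm{Coalg}_I(TF+T)$ is the category of $I$-pointed coalgebras in $\mathscr C$ for the functor $TF+T$. $G$ sends $(C,c,i_C)$ to the coalgebra on $C+I$ with structure $(TF\mathsf{inl}+T\mathsf{inl})\cdot(c+i_C)\colon C+I\to TF(C+I)+T(C+I)$ and pointing $\mathsf{inr}\colon I\to C+I$, and sends a pure homomorphism $h$ (viewed as a $\mathscr C$-morphism) to $h+\mathrm{id}_I$. *)

Set Implicit Arguments.
Unset Strict Implicit.

Record Cat := {
  ob :> Type;
  hom : ob -> ob -> Type;
  idm : forall a, hom a a;
  cmp : forall x y z, hom y z -> hom x y -> hom x z;
  cmp_idl : forall a b (f : hom a b), cmp (idm b) f = f;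
  cmp_idr : forall a b (f : hom a b), cmp f (idm a) = f;
  cmp_assoc : forall a b c d (h : hom c d) (g : hom b c) (f : hom a b),
      cmp h (cmp g f) = cmp (cmp h g) f
}.
Arguments hom {c} _ _ : rename.
Arguments idm {c} _ : rename.
Arguments cmp {c x y z} _ _ : rename.

Notation "g ⊚ f" := (cmp g f) (at level 40, left associativity).

Definition monic {C : Cat} {a b : C} (m : hom a b) : Prop :=
  forall z (f g : hom z a), m ⊚ f = m ⊚ g -> f = g.

Definition is_iso {C : Cat} {a b : C} (f : hom a b) : Prop :=
  exists g : hom b a, g ⊚ f = idm a /\ f ⊚ g = idm b.

Record Functor (C : Cat) := {
  fo :> C -> C;
  fm : forall a b, hom a b -> hom (fo a) (fo b);
  fm_id : forall a, fm (idm a) = idm (fo a);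
  fm_cmp : forall a b c (g : hom b c) (f : hom a b), fm (g ⊚ f) = fm g ⊚ fm f
}.
Arguments fm {C} f {a b} _ : rename.

Record Coprods (C : Cat) := {
  coprod : C -> C -> C;
  cinl : forall A B, hom A (coprod A B);
  cinr : forall A B, hom B (coprod A B);
  copair : forall A B X, hom A X -> hom B X -> hom (coprod A B) X;
  copair_inl : forall A B X (f : hom A X) (g : hom B X), copair f g ⊚ cinl A B = f;
  copair_inr : forall A B X (f : hom A X) (g : hom B X), copair f g ⊚ cinr A B = g;
  copair_uniq : forall A B X (f : hom A X) (g : hom B X) (h : hom (coprod A B) X),
      h ⊚ cinl A B = f -> h ⊚ cinr A B = g -> h = copair f g;
  init : C;
  init_mor : forall X, hom init X;
  init_uniq : forall X (f g : hom init X), f = g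
}.
Arguments coprod {C} _ _ _ : rename.
Arguments cinl {C} _ _ _ : rename.
Arguments cinr {C} _ _ _ : rename.
Arguments copair {C} _ {A B X} _ _ : rename.

Section CoprodMap.
Variables (C : Cat) (cp : Coprods C).
Definition cpmap {A B A' B' : C} (f : hom A A') (g : hom B B')
  : hom (coprod cp A B) (coprod cp A' B') :=
  copair cp (cinl cp A' B' ⊚ f) (cinr cp A' B' ⊚ g).

(** Extensivity: for all A, B the canonical functor
    C/A x C/B -> C/(A+B), ((X,f),(Y,g)) |-> (X+Y, f+g), (u,v) |-> u+v,
    is an equivalence, i.e. full, faithful and essentially surjective. *)
Definition extensive : Prop :=
  (forall (A B X Y X' Y' : C) (f : hom X A) (g : hom Y B) (f' : hom X' A) (g' : hom Y' B)
          (w : hom (coprod cp X Y) (coprod cp X' Y')),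
      cpmap f' g' ⊚ w = cpmap f g ->
      exists (u : hom X X') (v : hom Y Y'), f' ⊚ u = f /\ g' ⊚ v = g /\ w = cpmap u v)
  /\
  (forall (A B X Y X' Y' : C) (f : hom X A) (g : hom Y B) (f' : hom X' A) (g' : hom Y' B)
          (u1 u2 : hom X X') (v1 v2 : hom Y Y'),
      f' ⊚ u1 = f -> f' ⊚ u2 = f -> g' ⊚ v1 = g -> g' ⊚ v2 = g ->
      cpmap u1 v1 = cpmap u2 v2 -> u1 = u2 /\ v1 = v2)
  /\
  (* essentially surjective (isomorphism in the slice over A+B) *)
  (forall (A B Z : C) (h : hom Z (coprod cp A B)),
      exists (X Y : C) (f : hom X A) (g : hom Y B) (phi : hom (coprod cp X Y) Z),
        is_iso phi /\ h ⊚ phi = cpmap f g).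
End CoprodMap.

Record Monad (C : Cat) := {
  mT :> Functor C;
  eta : forall X : C, hom X (mT X);
  mu : forall X : C, hom (mT (mT X)) (mT X);
  eta_nat : forall (X Y : C) (f : hom X Y), fm mT f ⊚ eta X = eta Y ⊚ f;
  mu_nat : forall (X Y : C) (f : hom X Y), fm mT f ⊚ mu X = mu Y ⊚ fm mT (fm mT f);
  mu_eta_l : forall X : C, mu X ⊚ eta (mT X) = idm (mT X);
  mu_eta_r : forall X : C, mu X ⊚ fm mT (eta X) = idm (mT X);
  mu_assoc : forall X : C, mu X ⊚ fm mT (mu X) = mu X ⊚ mu (mT X)
}.
Arguments eta {C} _ _ : rename.
Arguments mu {C} _ _ : rename.

Definition consistent {C : Cat} (M : Monad C) : Prop := forall X : C, monic (eta M X).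

Section Kleisli.
Variables (C : Cat) (M : Monad C).
Definition kl_cmp {X Y Z : C} (g : hom Y (M Z)) (f : hom X (M Y)) : hom X (M Z) :=
  mu M Z ⊚ fm M g ⊚ f.
Definition J {X Y : C} (f : hom X Y) : hom X (M Y) := eta M Y ⊚ f.

(** An extension Fbar : Kl(T) -> Kl(T) of F (Fbar J = J F; in particular Fbar
    agrees with F on objects). *)
Record Extension (F : Functor C) := {
  Fb : forall X Y : C, hom X (M Y) -> hom (F X) (M (F Y));
  Fb_id : forall X : C, Fb (eta M X) = eta M (F X);
  Fb_cmp : forall (X Y Z : C) (g : hom Y (M Z)) (f : hom X (M Y)),
      Fb (kl_cmp g f) = kl_cmp (Fb g) (Fb f);
  Fb_J : forall (X Y : C) (f : hom X Y), Fb (J f) = J (fm F f)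
}.
Arguments Fb {F} _ {X Y} _ : rename.
End Kleisli.
Arguments kl_cmp {C} M {X Y Z} _ _ : rename.
Arguments J {C} M {X Y} _ : rename.
Arguments Fb {C M F} _ {X Y} _ : rename.

Unset Implicit Arguments.
Section Coalgebras.
Variables (C : Cat) (cp : Coprods C) (M : Monad C) (F : Functor C)
          (Fbar : Extension M F) (I : C).

Record PCoalg := { pcar : C; pstr : hom pcar (M (F pcar)); ppt : hom I (M pcar) }.

Definition pure_hom (A B : PCoalg) (h : hom (pcar A) (pcar B)) : Prop :=
  kl_cmp M (Fb Fbar (J M h)) (pstr A) = kl_cmp M (pstr B) (J M h)
  /\ kl_cmp M (J M h) (ppt A) = ppt B.

(** isomorphism in Coalg_I^p(Fbar) (composition of pure morphisms is composition in C) *)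
Definition pcoalg_iso (A B : PCoalg) (h : hom (pcar A) (pcar B)) : Prop :=
  pure_hom A B h /\
  exists k : hom (pcar B) (pcar A),
    pure_hom B A k /\ k ⊚ h = idm (pcar A) /\ h ⊚ k = idm (pcar B).

Definition H (X : C) : C := coprod cp (M (F X)) (M X).
Definition Hmap {X Y : C} (f : hom X Y) : hom (H X) (H Y) :=
  cpmap cp (fm M (fm F f)) (fm M f).

Record Coalg := { ccar : C; cstr : hom ccar (H ccar); cpt : hom I ccar }.

Definition coalg_hom (A B : Coalg) (h : hom (ccar A) (ccar B)) : Prop :=
  cstr B ⊚ h = Hmap h ⊚ cstr A /\ h ⊚ cpt A = cpt B.

Definition coalg_iso (A B : Coalg) (h : hom (ccar A) (ccar B)) : Prop :=
  coalg_hom A B h /\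
  exists k : hom (ccar B) (ccar A),
    coalg_hom B A k /\ k ⊚ h = idm (ccar A) /\ h ⊚ k = idm (ccar B).

Definition G_obj (A : PCoalg) : Coalg :=
  {| ccar := coprod cp (pcar A) I;
     cstr := cpmap cp (fm M (fm F (cinl cp (pcar A) I))) (fm M (cinl cp (pcar A) I))
               ⊚ cpmap cp (pstr A) (ppt A);
     cpt := cinr cp (pcar A) I |}.

Definition G_mor (A B : PCoalg) (h : hom (pcar A) (pcar B))
  : hom (ccar (G_obj A)) (ccar (G_obj B)) :=
  cpmap cp h (idm I).
End Coalgebras.
Arguments PCoalg {C} M F I.
Arguments Coalg {C} cp M F I.
Arguments pcar {C M F I} _.
Arguments pure_hom {C M F} Fbar {I} A B h.
Arguments pcoalg_iso {C M F} Fbar {I} A B h.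
Arguments coalg_iso {C cp M F I} A B h.
Arguments G_obj {C} cp {M F I} A.
Arguments G_mor {C} cp {M F I} A B h.

(* Extensivity makes a coproduct of maps f + g behave componentwise: coprojections
   are monic, f + g is monic when f and g are, f is monic when f + g is, and every
   inverse of f + g is itself a coproduct of maps, so f is invertible when f + g is.
   As G h = h + id_I, this gives the statement about monomorphisms and an inverse u
   of h in the base category; u is a pure homomorphism because the inverse of a
   homomorphism is one, a computation in the Kleisli category. *)

Set Implicit Arguments.
Unset Strict Implicit.

Lemma monic_idm (C : Cat) (X : C) : monic (idm X).
Proof. intros Z f g E. now rewrite !cmp_idl in E. Qed.

Section CoproductMaps.
Variables (C : Cat) (cp : Coprods C).

Lemma cpmap_inl (A B A' B' : C) (f : hom A A') (g : hom B B') :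
  cpmap cp f g ⊚ cinl cp A B = cinl cp A' B' ⊚ f.
Proof. apply copair_inl. Qed.

Lemma cpmap_inr (A B A' B' : C) (f : hom A A') (g : hom B B') :
  cpmap cp f g ⊚ cinr cp A B = cinr cp A' B' ⊚ g.
Proof. apply copair_inr. Qed.

Lemma cpmap_comp (A B A' B' A'' B'' : C) (f' : hom A' A'') (g' : hom B' B'')
  (f : hom A A') (g : hom B B') :
  cpmap cp f' g' ⊚ cpmap cp f g = cpmap cp (f' ⊚ f) (g' ⊚ g).
Proof.
  apply copair_uniq.
  - rewrite <- cmp_assoc, cpmap_inl, cmp_assoc, cpmap_inl, cmp_assoc. reflexivity.
  - rewrite <- cmp_assoc, cpmap_inr, cmp_assoc, cpmap_inr, cmp_assoc. reflexivity.
Qed.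

Lemma cpmap_id (A B : C) : cpmap cp (idm A) (idm B) = idm (coprod cp A B).
Proof.
  symmetry. apply copair_uniq; rewrite cmp_idl, cmp_idr; reflexivity.
Qed.

Hypothesis Hext : extensive cp.

(* Fullness over the slices of A + 0 writes b + id_0 as u + v with u = a; the
   retraction [id_A, !] of the coprojection A -> A + 0 then recovers b = u. *)
Lemma cinl_monic (A B : C) : monic (cinl cp A B).
Proof.
  intros Z a b E.
  destruct Hext as [Hfull _].
  destruct (Hfull A B Z (init cp) A (init cp) a (init_mor cp B) (idm A) (init_mor cp B)
              (cpmap cp b (idm (init cp)))) as [u [v [Hua [_ Euv]]]].
  { rewrite cpmap_comp, cmp_idl. unfold cpmap. rewrite E.
    f_equal. f_equal. apply init_uniq. }
  rewrite cmp_idl in Hua. subst u.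
  assert (Hretr : forall (x : hom Z A) (y : hom (init cp) (init cp)),
             copair cp (idm A) (init_mor cp A) ⊚ (cpmap cp x y ⊚ cinl cp Z (init cp)) = x).
  { intros x y. rewrite cpmap_inl, cmp_assoc, copair_inl, cmp_idl. reflexivity. }
  rewrite <- (Hretr a v), <- Euv. apply Hretr.
Qed.

Lemma cpmap_monic_l (X Y X' Y' : C) (f : hom X X') (g : hom Y Y') :
  monic (cpmap cp f g) -> monic f.
Proof.
  intros Hm Z a b E.
  apply (@cinl_monic X Y), Hm.
  rewrite !cmp_assoc, !cpmap_inl, <- !cmp_assoc, E. reflexivity.
Qed.

(* Essential surjectivity splits the domain of (f + g) a as X0 + Y0; fullness then
   splits a and b into coproducts of maps, which f and g compare componentwise. *)
Lemma cpmap_monic (X Y X' Y' : C) (f : hom X X') (g : hom Y Y') :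
  monic f -> monic g -> monic (cpmap cp f g).
Proof.
  intros Hf Hg Z a b E.
  destruct Hext as [Hfull [_ Hsurj]].
  destruct (Hsurj X' Y' Z (cpmap cp f g ⊚ a))
    as [X0 [Y0 [f0 [g0 [phi [[psi [_ Hpsi]] Ephi]]]]]].
  destruct (Hfull _ _ _ _ _ _ f0 g0 f g (a ⊚ phi)) as [ua [va [Hua [Hva Ea]]]].
  { rewrite cmp_assoc. exact Ephi. }
  destruct (Hfull _ _ _ _ _ _ f0 g0 f g (b ⊚ phi)) as [ub [vb [Hub [Hvb Eb]]]].
  { rewrite cmp_assoc, <- E. exact Ephi. }
  assert (ua = ub) by (apply Hf; congruence).
  assert (va = vb) by (apply Hg; congruence).
  subst ub vb.
  rewrite <- (cmp_idr a), <- (cmp_idr b), <- Hpsi, !cmp_assoc, Ea, Eb.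
  reflexivity.
Qed.

Lemma cpmap_is_iso_l (X Y X' Y' : C) (f : hom X X') (g : hom Y Y') :
  is_iso (cpmap cp f g) -> is_iso f.
Proof.
  intros [k [Hkl Hkr]].
  destruct Hext as [Hfull _].
  destruct (Hfull X' Y' X' Y' X Y (idm X') (idm Y') f g k) as [u [v [Hfu [_ Ek]]]].
  { rewrite Hkr, cpmap_id. reflexivity. }
  exists u. split; [|exact Hfu].
  apply (@cinl_monic X Y).
  rewrite <- cpmap_inl with (g := v ⊚ g), <- cpmap_comp, <- Ek, Hkl, cmp_idl, cmp_idr.
  reflexivity.
Qed.

End CoproductMaps.

Section KleisliCalculus.
Variables (C : Cat) (M : Monad C).

Lemma J_idm (X : C) : J M (idm X) = eta M X.
Proof. apply cmp_idr. Qed.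

Lemma kl_idl (X Y : C) (f : hom X (M Y)) : kl_cmp M (eta M Y) f = f.
Proof. unfold kl_cmp. rewrite mu_eta_r, cmp_idl. reflexivity. Qed.

Lemma kl_J_r (X Y Z : C) (g : hom Y (M Z)) (f : hom X Y) : kl_cmp M g (J M f) = g ⊚ f.
Proof.
  unfold kl_cmp, J.
  rewrite cmp_assoc, <- (cmp_assoc (mu M Z)), eta_nat, cmp_assoc, mu_eta_l, cmp_idl.
  reflexivity.
Qed.

Lemma kl_idr (X Y : C) (f : hom X (M Y)) : kl_cmp M f (eta M X) = f.
Proof. rewrite <- J_idm, kl_J_r. apply cmp_idr. Qed.

Lemma kl_JJ (X Y Z : C) (g : hom Y Z) (f : hom X Y) :
  kl_cmp M (J M g) (J M f) = J M (g ⊚ f).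
Proof. rewrite kl_J_r. symmetry. apply cmp_assoc. Qed.

Lemma kl_assoc (W X Y Z : C) (h : hom Y (M Z)) (g : hom X (M Y)) (f : hom W (M X)) :
  kl_cmp M h (kl_cmp M g f) = kl_cmp M (kl_cmp M h g) f.
Proof.
  unfold kl_cmp. rewrite !fm_cmp, !cmp_assoc. f_equal. f_equal.
  rewrite mu_assoc, <- !cmp_assoc, mu_nat. reflexivity.
Qed.

End KleisliCalculus.

Lemma pure_hom_inverse (C : Cat) (M : Monad C) (F : Functor C) (Fbar : Extension M F)
  (I : C) (A B : PCoalg M F I) (h : hom (pcar A) (pcar B)) (u : hom (pcar B) (pcar A)) :
  pure_hom Fbar A B h -> u ⊚ h = idm (pcar A) -> h ⊚ u = idm (pcar B) ->
  pure_hom Fbar B A u.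
Proof.
  intros [Hstr Hpt] Huh Hhu.
  split.
  - rewrite <- (kl_idl (kl_cmp M (pstr _ _ _ _ A) (J M u))),
            <- (Fb_id Fbar), <- J_idm, <- Huh, <- kl_JJ, Fb_cmp,
            <- kl_assoc, (kl_assoc (Fb Fbar (J M h))), Hstr,
            <- !kl_assoc, kl_JJ, Hhu, J_idm, kl_idr.
    reflexivity.
  - rewrite <- Hpt, kl_assoc, kl_JJ, Huh, J_idm. apply kl_idl.
Qed.

Theorem proposition6p10
  (C : Cat) (cp : Coprods C) (Hext : extensive cp)
  (M : Monad C) (Hcons : consistent M)
  (F : Functor C) (Fbar : Extension M F) (I : C) :
  forall (A B : PCoalg M F I) (h : hom (pcar A) (pcar B)),
    pure_hom Fbar A B h ->
    (coalg_iso (G_obj cp A) (G_obj cp B) (G_mor cp A B h) -> pcoalg_iso Fbar A B h)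
    /\ (monic h <-> monic (G_mor cp A B h)).
Proof.
  intros A B h Hh. split.
  - intros [_ [k [_ [Hkl Hkr]]]].
    destruct (cpmap_is_iso_l Hext (ex_intro _ k (conj Hkl Hkr))) as [u [Huh Hhu]].
    split; [exact Hh|].
    exists u. split; [|split; assumption].
    exact (pure_hom_inverse Hh Huh Hhu).
  - split.
    + intros Hm. exact (cpmap_monic Hext Hm (@monic_idm C I)).
    + apply (cpmap_monic_l Hext).
Qed.
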